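(* For a positive integer $n$, let $f(n)$ be the maximum value of $\operatorname{Re}\big(\sum_{\xi \in S} \xi\big)$ over all subsets $S$ of the set of $n$-th roots of unity. Then $f(n) \le n/3$ for all $n \ge 3$, and $\lim_{n \to \infty} \frac{f(n)}{n} = \frac{1}{\pi}$. *)

From mathcomp Require Import all_boot all_order all_algebra.
From mathcomp Require Import all_classical all_reals all_analysis.
From mathcomp Require Import complex.
Import Order.TTheory GRing.Theory Num.Theory.
Local Open Scope ring_scope.

Definition root_unity (R : realType) (n : nat) (k : 'I_n) : R[i] :=
  Complex (cos (2 * pi * k%:R / n%:R)) (sin (2 * pi * k%:R / n%:R)).

(* Subsets are indexed by subsets of 'I_n (the map k |-> root_unity n k is a
   bijection onto the n-th roots of unity). The empty set gives 0, so using 0 as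
   the neutral element of max does not change the value. *)
Definition f_roots (R : realType) (n : nat) : R :=
  \big[Order.max/0]_(S : {set 'I_n}) complex.Re (\sum_(k in S) root_unity R n k).

From mathcomp Require Import all_boot all_order all_algebra.
From mathcomp Require Import all_classical all_reals all_analysis.
From mathcomp Require Import complex.
From mathcomp Require Import ring lra zify.
Import Order.TTheory GRing.Theory Num.Theory.
Import numFieldNormedType.Exports.
Local Open Scope classical_set_scope.
Local Open Scope ring_scope.

(* The sum of a subset of the n-th roots of unity has the largest real part when
   the subset is the set of roots with positive real part, so f(n) is the sum
   of the positive parts of cos(2 k pi / n), i.e. 1 + 2 sum_(1 <= k <= m)
   cos(2 k pi / n) with m = (n - 1) / 4.  Multiplying by sin(pi / n) collapses
   this Dirichlet kernel to sin((2 m + 1) pi / n), whose argument lies within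
   pi / n of pi / 2; hence 1 - (pi / n)^2 / 2 <= f(n) sin(pi / n) <= 1.
   Taylor bounds on sin then give |pi f(n) - n| <= pi for n >= 3, hence the
   limit 1 / pi, and f(n) <= n / 3 for n >= 7 using pi > 3.12; for 3 <= n <= 6
   the sums are computed exactly from cos(pi / 3) = 1 / 2 and cos(2 pi / 5) <= 1 / 3. *)

Section trigonometric_bounds.
Context {R : realType}.
Implicit Types x y : R.

Lemma ger0_derive_le (f df : R -> R) x : 0 <= x ->
  (forall y, is_derive y 1 f (df y)) -> (forall y, 0 <= y -> 0 <= df y) ->
  f 0 <= f x.
Proof.
move=> x0 fd df0.
have cf : {within `[0, x], continuous f}.
  apply: continuous_subspaceT => y.
  apply/differentiable_continuous/derivable1_diffP.
  exact: (@ex_derive _ _ _ _ _ _ _ (fd y)).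
rewrite -subr_ge0; have [c + ->] := MVT_segment x0 (fun y _ => fd y) cf.
by rewrite in_itv /= => /andP[c0 _]; rewrite mulr_ge0 ?subr0 ?df0.
Qed.

Lemma sin_le_taylor1 x : 0 <= x -> sin x <= x.
Proof.
move=> x0; rewrite -subr_ge0 -[0](subrr 0) -[X in _ - X]sin0.
by apply: (@ger0_derive_le (fun y => y - sin y) (fun y => 1 - cos y)).
Qed.

Lemma taylor2_le_cos_ge0 x : 0 <= x -> 1 - x ^+ 2 / 2 <= cos x.
Proof.
move=> x0; rewrite -subr_ge0.
have := @ger0_derive_le (fun y => cos y - (1 - y ^+ 2 / 2)) (fun y => y - sin y) x x0.
rewrite cos0 expr0n /= mul0r subr0 subrr; apply.
  by move=> y; apply: is_derive_eq; rewrite /GRing.scale /=; field.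
by move=> y y0; rewrite subr_ge0 sin_le_taylor1.
Qed.

Lemma taylor2_le_cos x : 1 - x ^+ 2 / 2 <= cos x.
Proof. by rewrite -cos_norm -real_normK ?num_real // taylor2_le_cos_ge0. Qed.

Lemma taylor3_le_sin x : 0 <= x -> x - x ^+ 3 / 6 <= sin x.
Proof.
move=> x0; rewrite -subr_ge0.
have := @ger0_derive_le (fun y => sin y - (y - y ^+ 3 / 6))
  (fun y => cos y - (1 - y ^+ 2 / 2)) x x0.
rewrite sin0 expr0n /= mul0r !subr0; apply.
  by move=> y; apply: is_derive_eq; rewrite /GRing.scale /=; field.
by move=> y _; rewrite subr_ge0 taylor2_le_cos.
Qed.

Lemma cos_le_taylor4 x : 0 <= x -> cos x <= 1 - x ^+ 2 / 2 + x ^+ 4 / 24.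
Proof.
move=> x0; rewrite -subr_ge0.
have := @ger0_derive_le (fun y => 1 - y ^+ 2 / 2 + y ^+ 4 / 24 - cos y)
  (fun y => sin y - (y - y ^+ 3 / 6)) x x0.
rewrite cos0 !expr0n /= !mul0r subr0 addr0 subrr; apply.
  by move=> y; apply: is_derive_eq; rewrite /GRing.scale /=; field.
by move=> y y0; rewrite subr_ge0 taylor3_le_sin.
Qed.

Lemma sin_le_taylor5 x : 0 <= x -> sin x <= x - x ^+ 3 / 6 + x ^+ 5 / 120.
Proof.
move=> x0; rewrite -subr_ge0.
have := @ger0_derive_le (fun y => y - y ^+ 3 / 6 + y ^+ 5 / 120 - sin y)
  (fun y => 1 - y ^+ 2 / 2 + y ^+ 4 / 24 - cos y) x x0.
rewrite sin0 !expr0n /= !mul0r !subr0 addr0; apply.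
  by move=> y; apply: is_derive_eq; rewrite /GRing.scale /=; field.
by move=> y y0; rewrite subr_ge0 cos_le_taylor4.
Qed.

Lemma pi_gt_78_25 : 78 / 25 < pi :> R.
Proof.
pose a : R := 39 / 50; have a0 : 0 <= a by rewrite /a; lra.
have cos_2a : 0 < cos (a *+ 2).
  have := sin_le_taylor5 _ a0; have := taylor3_le_sin _ a0.
  rewrite cos_mulr2n cos2sin2 /a => ? ?; nra.
have pi_ge2 := @pi_ge2 R; have pi_le4 : pi <= 4 :> R by have := @pihalf_lt2 R; lra.
have : cos (pi / 2) < cos (a *+ 2) by rewrite cos_pihalf.
set h := pi / 2; have h_def : h * 2 = pi by rewrite /h; field.
by rewrite ltr_cos ?in_itv /= /a ?mulr2n; try (apply/andP; split); lra.
Qed.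

Lemma cos_mulr3n x : cos (x *+ 3) = 4 * cos x ^+ 3 - 3 * cos x.
Proof.
rewrite mulrSr cosD cos_mulr2n sin_mulr2n.
have -> : (cos x * sin x) *+ 2 * sin x = (cos x * sin x ^+ 2) *+ 2 by ring.
by rewrite sin2cos2; ring.
Qed.

Lemma cos_pi3 : cos (pi / 3) = 1 / 2 :> R.
Proof.
have pi_gt0 := @pi_gt0 R.
have c_gt0 : 0 < cos (pi / 3 : R) by apply: cos_gt0_pihalf; apply/andP; split; lra.
have := cos_mulr3n (pi / 3 : R); rewrite (_ : _ *+ 3 = pi) ?cospi; last first.
  by rewrite !mulrS mulr0n; field.
move: c_gt0; set c := cos _ => c_gt0 c3.
have : (c + 1) * (2 * c - 1) ^+ 2 = 0.
  by transitivity (4 * c ^+ 3 - 3 * c + 1); [ring | rewrite -c3 addNr].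
move/eqP; rewrite mulf_eq0 expf_eq0 /= => /orP[] /eqP; lra.
Qed.

Lemma cos_2pi5_le : cos (2 * pi / 5) <= 1 / 3 :> R.
Proof.
have pi_gt0 := @pi_gt0 R; set a : R := 2 * pi / 5.
have c_gt0 : 0 < cos a by apply: cos_gt0_pihalf; apply/andP; split; rewrite /a; lra.
have s_gt0 : 0 < sin a by apply: sin_gt0_pi; apply/andP; split; rewrite /a; lra.
have c2 := cos2sin2 a.
have : cos (a *+ 3) = cos (a *+ 2).
  rewrite (_ : a *+ 3 = pi *+ 2 - a *+ 2); last by rewrite /a !mulrS mulr0n; field.
  by rewrite cosB cos2pi sin2pi mul1r mul0r addr0.
rewrite cos_mulr3n cos_mulr2n.
move: c_gt0 c2; set c := cos a => c_gt0 c2 c32.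
have : (c - 1) * (4 * c ^+ 2 + 2 * c - 1) = 0.
  by transitivity (4 * c ^+ 3 - 3 * c - (c ^+ 2 *+ 2 - 1)); [ring | rewrite c32 subrr].
move/eqP; rewrite mulf_eq0 => /orP[] /eqP; nra.
Qed.

Lemma sin_mul_dirichlet x m :
  sin x * (1 + 2 * \sum_(1 <= k < m.+1) cos (2 * k%:R * x)) =
  sin ((2 * m%:R + 1) * x).
Proof.
elim: m => [|m IHm]; first by rewrite big_geq // !mulr0 addr0 mulr1 add0r mul1r.
rewrite big_nat_recr //= (mulrDr 2) addrA (mulrDr (sin x)) IHm.
have -> : (2 * m%:R + 1) * x = 2 * m.+1%:R * x - x by rewrite -addn1 natrD; ring.
have -> : (2 * m.+1%:R + 1) * x = 2 * m.+1%:R * x + x by ring.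
by rewrite sinB sinD; ring.
Qed.

End trigonometric_bounds.

Lemma bigmax_set_sum (R : realDomainType) (I : finType) (a : I -> R) :
  \big[Order.max/0]_(S : {set I}) \sum_(i in S) a i = \sum_i Num.max 0 (a i).
Proof.
have max0_ge (x : R) : (0 <= Num.max 0 x) && (x <= Num.max 0 x).
  by rewrite !le_max !lexx orbT.
apply/eqP; rewrite eq_le; apply/andP; split.
  apply: bigmax_le => [|S _]; first by apply: sumr_ge0 => i _; case/andP: (max0_ge (a i)).
  rewrite [X in X <= _]big_mkcond /=; apply: ler_sum => i _.
  by case: (i \in S); case/andP: (max0_ge (a i)).
pose Spos := [set i | 0 < a i]%SET.
apply: le_trans (le_bigmax 0 (fun S : {set I} => \sum_(i in S) a i) Spos).
rewrite [X in _ <= X]big_mkcond /=; apply: ler_sum => i _; rewrite inE.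
by case: ltP.
Qed.

Section positive_cosines.
Variable R : realType.
Implicit Types n k : nat.

Definition root_cos n k : R := cos (2 * k%:R * (pi / n%:R)).

Lemma f_rootsE n : f_roots R n = \sum_(k < n) Num.max 0 (root_cos n k).
Proof.
rewrite /f_roots -bigmax_set_sum; apply: eq_bigr => S _.
rewrite (big_morph (@complex.Re R) (id1 := 0) (op1 := +%R)) //; last by case=> ? ? [].
by apply: eq_bigr => k _; rewrite /root_cos /=; congr cos; ring.
Qed.

Lemma root_cos0 n : root_cos n 0 = 1.
Proof. by rewrite /root_cos mulr0 mul0r cos0. Qed.

Lemma root_cosBn n k : (k <= n)%N -> root_cos n (n - k) = root_cos n k.
Proof.
case: n => [|n] k_le_n; first by move: k_le_n; rewrite leqn0 => /eqP->.
rewrite /root_cos natrB // (_ : _ * _ = pi *+ 2 - 2 * k%:R * (pi / n.+1%:R)).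
  by rewrite cosB cos2pi sin2pi mul1r mul0r addr0.
by rewrite mulr2n; field.
Qed.

Lemma root_cos_gt0 n k : (4 * k < n)%N -> 0 < root_cos n k.
Proof.
move=> lt4k; have n_gt0 : (0 < n%:R :> R) by rewrite ltr0n; lia.
have : 4 * k%:R < n%:R :> R by rewrite -natrM ltr_nat.
rewrite /root_cos; have x_gt0 : 0 < pi / n%:R :> R by rewrite divr_gt0 ?pi_gt0.
set x := pi / n%:R in x_gt0 *; have pi_eq : pi = x * n%:R by rewrite /x divfK ?gt_eqF.
have k_ge0 : 0 <= k%:R :> R by [].
move=> ?; apply: cos_gt0_pihalf; rewrite pi_eq; apply/andP; split; nra.
Qed.

Lemma root_cos_le0 n k : (0 < n)%N -> (n <= 4 * k <= 3 * n)%N -> root_cos n k <= 0.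
Proof.
move=> n_gt0 /andP[n_le4k le4k].
have : n%:R <= 4 * k%:R :> R by rewrite -natrM ler_nat.
have : 4 * k%:R <= 3 * n%:R :> R by rewrite -!natrM ler_nat.
rewrite /root_cos; have x_gt0 : 0 < pi / n%:R :> R by rewrite divr_gt0 ?pi_gt0 ?ltr0n.
set x := pi / n%:R in x_gt0 *; have pi_eq : pi = x * n%:R.
  by rewrite /x divfK // pnatr_eq0 -lt0n.
move=> ? ?; rewrite -(subrK pi (2 * _ * x)) cosDpi oppr_le0.
by apply: cos_ge0_pihalf; rewrite pi_eq; apply/andP; split; nra.
Qed.

Lemma sum_max0_root_cos n : (0 < n)%N ->
  \sum_(k < n) Num.max 0 (root_cos n k) =
  1 + 2 * \sum_(1 <= k < ((n - 1) %/ 4).+1) root_cos n k.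
Proof.
move=> n_gt0; set m := ((n - 1) %/ 4)%N.
have m_bounds : (4 * m < n <= 4 * m + 4)%N by rewrite /m; lia.
(* [root_cos n k > 0] iff [k <= m] or [n - k <= m]; [F] keeps the first kind. *)
pose F k := if (4 * k < n)%N then root_cos n k else 0.
have max0_split (k : nat) :
    (0 < k < n)%N -> Num.max 0 (root_cos n k) = F k + F (n - k)%N.
  move=> /andP[k_gt0 k_lt_n]; rewrite /F root_cosBn; last exact: ltnW.
  case: ifP => lt4k; case: ifP => lt4nk.
  - lia.
  - by rewrite addr0 max_r // ltW // root_cos_gt0.
  - by rewrite add0r max_r // ltW // -(root_cosBn _ _ (ltnW k_lt_n)) root_cos_gt0.
  - by rewrite addr0 max_l // root_cos_le0 //; lia.
have sumF : \sum_(1 <= k < n) F k = \sum_(1 <= k < m.+1) root_cos n k.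
  rewrite (big_cat_nat (n := m.+1)) /= ?[X in _ + X]big1_seq ?addr0; try lia.
    by apply: eq_big_nat => k /andP[_ ?]; rewrite /F ifT //; lia.
  by move=> k; rewrite mem_index_iota /F => /andP[_ ?]; rewrite ifF //; lia.
rewrite -(big_mkord xpredT (fun k => Num.max 0 (root_cos n k))) big_ltn //.
rewrite root_cos0 max_r // (eq_big_nat _ _ max0_split).
rewrite big_split /= [X in _ + (_ + X)]big_nat_rev /=.
rewrite (eq_big_nat _ _ (F2 := F)) => [|i /andP[_ i_lt_n]]; last by congr F; lia.
by rewrite sumF -mulr2n mulr_natl.
Qed.

End positive_cosines.

Section f_roots_bounds.
Variable R : realType.
Implicit Types n : nat.

Lemma f_roots_sum n : (0 < n)%N ->
  f_roots R n = 1 + 2 * \sum_(1 <= k < ((n - 1) %/ 4).+1) root_cos R n k.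
Proof. by move=> n_gt0; rewrite f_rootsE sum_max0_root_cos. Qed.

Lemma f_roots_ge0 n : 0 <= f_roots R n.
Proof. by rewrite f_rootsE; apply: sumr_ge0 => k _; rewrite le_max lexx. Qed.

Lemma f_roots_sin_bounds n : (0 < n)%N ->
  1 - (pi / n%:R) ^+ 2 / 2 <= f_roots R n * sin (pi / n%:R) <= 1.
Proof.
move=> n_gt0; rewrite f_roots_sum // [_ * sin _]mulrC /root_cos.
rewrite sin_mul_dirichlet sin_le1 andbT.
set m := ((n - 1) %/ 4)%N; set x := pi / n%:R.
have : (4 * m + 1 <= n <= 4 * m + 4)%N by rewrite /m; lia.
rewrite -!(ler_nat R) !natrD => /andP[? ?].
(* [(2 m + 1) pi / n] lies within [pi / n] of [pi / 2]. *)
rewrite -cosBpihalf (le_trans _ (taylor2_le_cos _)) // lerD2l lerN2 ler_pM2r //.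
have -> : (2 * m%:R + 1) * x - pi / 2 = x * ((4 * m%:R + 2 - n%:R) / 2).
  by rewrite /x; field; rewrite pnatr_eq0 -lt0n.
rewrite exprMn ler_piMr ?sqr_ge0 //.
have : -1 <= (4 * m%:R + 2 - n%:R) / 2 :> R by lra.
have : (4 * m%:R + 2 - n%:R) / 2 <= 1 :> R by lra.
nra.
Qed.

Lemma three_le_n_sin_pi_div n : (7 <= n)%N -> 3 <= n%:R * sin (pi / n%:R) :> R.
Proof.
move=> n_ge7; have N_ge7 : 7 <= n%:R :> R by rewrite (ler_nat R 7).
have pi_gt := @pi_gt_78_25 R; have pi_le4 : pi <= 4 :> R by have := @pihalf_lt2 R; lra.
set x := pi / n%:R; have pi_eq : pi = x * n%:R by rewrite /x divfK // pnatr_eq0; lia.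
have x_ge0 : 0 <= x by rewrite divr_ge0 ?pi_ge0.
have x_le : x <= pi / 7 by rewrite ler_pdivlMr ?ltr0n // pi_eq; nra.
have pi_x2 : pi * x ^+ 2 <= pi * (pi / 7) ^+ 2.
  by rewrite ler_wpM2l ?pi_ge0 //; nra.
(* Chord minus cube on [[78/25, 4]]: it certifies [pi - pi ^+ 3 / 294 >= 3]. *)
have cubic : 0 <= (pi - 78 / 25) * (4 - pi) * (pi + 78 / 25 + 4) :> R.
  by rewrite !mulr_ge0 //; lra.
have e : n%:R * (x - x ^+ 3 / 6) = pi - pi * x ^+ 2 / 6 by rewrite pi_eq; ring.
have := ler_wpM2l (ler0n R n) (taylor3_le_sin _ x_ge0).
rewrite e; nra.
Qed.

Lemma f_roots_le_third n : (3 <= n)%N -> f_roots R n <= n%:R / 3.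
Proof.
move=> n_ge3; have [n_ge7 | n_lt7] := leqP 7 n.
  have /andP[_ F_sin_le1] := f_roots_sin_bounds n (ltnW (ltnW n_ge3)).
  have := ler_wpM2l (f_roots_ge0 n) (@three_le_n_sin_pi_div n n_ge7).
  have := ler_wpM2l (ler0n R n) F_sin_le1.
  rewrite mulrCA mulr1; lra.
rewrite f_roots_sum; last exact: leq_trans n_ge3.
have : n = 3%N \/ n = 4%N \/ n = 5%N \/ n = 6%N by lia.
case=> [|[|[|]]] ->; [by rewrite big_geq //; lra | by rewrite big_geq //; lra | |].
- rewrite (_ : (5 - 1) %/ 4 = 1)%N // big_nat1 /root_cos.
  rewrite (_ : 2 * 1%:R * _ = 2 * pi / 5); first by have := @cos_2pi5_le R; lra.
  by field.
- rewrite (_ : (6 - 1) %/ 4 = 1)%N // big_nat1 /root_cos.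
  by rewrite (_ : 2 * 1%:R * _ = pi / 3) ?cos_pi3; [lra | field].
Qed.

Lemma f_roots_mul_pi_bounds n : (3 <= n)%N ->
  n%:R - pi <= f_roots R n * pi <= n%:R + pi.
Proof.
move=> n_ge3; have N_ge3 : 3 <= n%:R :> R by rewrite (ler_nat R 3).
have pi_ge2 := @pi_ge2 R; have pi_le4 : pi <= 4 :> R by have := @pihalf_lt2 R; lra.
have /andP[lo hi] := f_roots_sin_bounds n (ltnW (ltnW n_ge3)).
have F_ge0 := f_roots_ge0 n; set F := f_roots R n in lo hi F_ge0 *.
set x := pi / n%:R in lo hi *.
have pi_eq : pi = x * n%:R by rewrite /x divfK // pnatr_eq0; lia.
have x_ge0 : 0 <= x by rewrite divr_ge0 ?pi_ge0.
have x_le : x <= 4 / 3 by rewrite ler_pdivlMr // mulrC; nra.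
have Fx_lo : 1 - x ^+ 2 / 2 <= F * x.
  exact: le_trans lo (ler_wpM2l F_ge0 (sin_le_taylor1 _ x_ge0)).
have Fx_hi : F * (x - x ^+ 3 / 6) <= 1.
  exact: le_trans (ler_wpM2l F_ge0 (taylor3_le_sin _ x_ge0)) hi.
have Fx_le2 : F * x <= 2.
  have : 1 / 2 <= 1 - x ^+ 2 / 6 by nra.
  have : F * x * (1 - x ^+ 2 / 6) <= 1.
    by rewrite (_ : F * x * _ = F * (x - x ^+ 3 / 6)) //; ring.
  have := mulr_ge0 F_ge0 x_ge0; nra.
have pi_x_le : pi * x <= pi * (4 / 3) by rewrite ler_wpM2l // ltW ?pi_gt0.
have := ler_pM (mulr_ge0 F_ge0 x_ge0) (mulr_ge0 (ltW (@pi_gt0 R)) x_ge0) Fx_le2 pi_x_le.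
have := ler_wpM2l (ler0n R n) Fx_lo; have := ler_wpM2l (ler0n R n) Fx_hi.
have -> : n%:R * (1 - x ^+ 2 / 2) = n%:R - pi * x / 2 by rewrite pi_eq; ring.
have -> : n%:R * (F * (x - x ^+ 3 / 6)) = F * pi - F * x * (pi * x) / 6.
  by rewrite pi_eq; ring.
have -> : n%:R * (F * x) = F * pi by rewrite pi_eq; ring.
move=> ? ? ?; apply/andP; split; lra.
Qed.

Lemma f_roots_div_bounds n : (3 <= n)%N ->
  pi^-1 - n%:R^-1 <= f_roots R n / n%:R <= pi^-1 + n%:R^-1.
Proof.
move=> n_ge3; have N_gt0 : 0 < n%:R :> R by rewrite ltr0n; lia.
have pi_gt0 := @pi_gt0 R.
have -> : f_roots R n / n%:R = (f_roots R n * pi) / (n%:R * pi) by field; lra.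
have -> : pi^-1 - n%:R^-1 = (n%:R - pi) / (n%:R * pi) :> R by field; lra.
have -> : pi^-1 + n%:R^-1 = (n%:R + pi) / (n%:R * pi) :> R by field; lra.
by rewrite !ler_pM2r ?invr_gt0 ?mulr_gt0 // f_roots_mul_pi_bounds.
Qed.

Lemma cvg_f_roots_div : f_roots R n / n%:R @[n --> \oo] --> pi^-1.
Proof.
have cvg_inv : (n%:R : R)^-1 @[n --> \oo] --> 0.
  by rewrite -cvg_shiftS; exact: cvg_harmonic.
have cvg_lo : pi^-1 - (n%:R : R)^-1 @[n --> \oo] --> pi^-1.
  by rewrite -[X in _ --> X]subr0; apply: cvgB cvg_inv; exact: cvg_cst.
have cvg_hi : pi^-1 + (n%:R : R)^-1 @[n --> \oo] --> pi^-1.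
  by rewrite -[X in _ --> X]addr0; apply: cvgD cvg_inv; exact: cvg_cst.
apply: squeeze_cvgr cvg_lo cvg_hi.
by exists 3%N => // n /= /f_roots_div_bounds.
Qed.

End f_roots_bounds.

Theorem lemma3p8 (R : realType) :
  (forall n : nat, (3 <= n)%N -> f_roots R n <= n%:R / 3) /\
  (f_roots R n / n%:R @[n --> \oo] --> (pi : R)^-1).
Proof. by split; [exact: f_roots_le_third | exact: cvg_f_roots_div]. Qed.
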